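(* Let $n$ be an integer with $n=u^4+v^4=r^4+s^4$ for integers $u,v,r,s$ satisfying $\gcd(u,v,r,s)=1$. If $p$ is an odd prime with $p\mid n$, then $p\equiv 1\pmod 8$. *)

From mathcomp Require Import all_boot all_algebra.
Set Implicit Arguments. Unset Strict Implicit. Unset Printing Implicit Defensive.

From mathcomp Require Import all_boot all_algebra.
From mathcomp Require Import finfield.
Import GRing.Theory.
Local Open Scope ring_scope.

(* Reduce modulo p. If p divides u^4 + v^4 but not v, then in 'F_p
   the ratio a = u / v satisfies a^4 = -1; as p is odd, -1 <> 1, so a has
   multiplicative order exactly 8, and 8 divides p - 1 = #|'F_p^*|. The gcd
   hypothesis guarantees that, up to swapping the summands, one of the two
   representations of n has this form. *)

Lemma dvdn_pfactor_max (q k m : nat) :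
  prime q -> (m %| q ^ k.+1)%N -> ~~ (m %| q ^ k)%N -> m = (q ^ k.+1)%N.
Proof.
move=> q_pr /(dvdn_pfactor _ _ q_pr)[j]; rewrite leq_eqVlt ltnS.
by case/orP=> [/eqP-> // | j_le_k] ->; rewrite dvdn_exp2l.
Qed.

Lemma expr4_eqN1_prim_root {R : nzRingType} {a : R} :
  2%:R != 0 :> R -> a ^+ 4 = -1 -> 8.-primitive_root a.
Proof.
move=> two_neq0 a4.
have a8 : a ^+ 8 = 1 by rewrite (exprM a 4 2) a4 sqrrN expr1n.
have a4_neq1 : a ^+ 4 != 1.
  by rewrite a4 eq_sym -subr_eq0 opprK.
have [m prim_m m_dvd8] := prim_order_exists (isT : (0 < 8)%N) a8.
have m_eq8 : m = (2 ^ 3)%N.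
  by apply: dvdn_pfactor_max; rewrite // (prim_order_dvd prim_m).
by move: prim_m; rewrite m_eq8.
Qed.

Lemma prim_root_dvdn_card_pred {F : finFieldType} {n : nat} {z : F} :
  n.-primitive_root z -> (n %| #|F|.-1)%N.
Proof.
move=> prim_z; rewrite (prim_order_dvd prim_z).
have z_neq0 : z != 0 by rewrite (prim_root_eq0 prim_z) -lt0n (prim_order_gt0 prim_z).
apply/eqP; apply: (mulIf z_neq0); rewrite mul1r -exprSr prednK ?expf_card //.
by rewrite (cardD1 0).
Qed.

Lemma expr4_div_sum_eq0 {F : fieldType} {x y : F} :
  y != 0 -> x ^+ 4 + y ^+ 4 = 0 -> (x / y) ^+ 4 = -1.
Proof.
move=> y_neq0 /eqP; rewrite addr_eq0 => /eqP x4.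
by rewrite expr_div_n x4 mulNr divff ?expf_neq0.
Qed.

Section OddPrime.

Variable p : nat.
Hypotheses (p_pr : prime p) (p_odd : odd p).

Lemma Fp_two_neq0 : 2%:R != 0 :> 'F_p.
Proof.
rewrite -(dvdn_pcharf (pchar_Fp p_pr)) dvdn_prime2 //.
by apply: contraTneq p_odd => ->.
Qed.

Lemma Fp_sum_expr4_eq0_mod8 (x y : 'F_p) :
  y != 0 -> x ^+ 4 + y ^+ 4 = 0 -> (p %% 8 = 1)%N.
Proof.
move=> y_neq0 xy4.
have prim8 := expr4_eqN1_prim_root Fp_two_neq0 (expr4_div_sum_eq0 y_neq0 xy4).
have := prim_root_dvdn_card_pred prim8; rewrite card_Fp // => /eqP p1_mod8.
by rewrite -(prednK (prime_gt0 p_pr)) -addn1 -modnDml p1_mod8.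
Qed.

Lemma dvdz_sum_expr4_mod8 (x y : int) :
  (p%:Z %| x ^+ 4 + y ^+ 4)%Z -> ~~ (p%:Z %| gcdz x y)%Z -> (p %% 8 = 1)%N.
Proof.
have pchar_p := pchar_Fp p_pr.
suff mod8 x' y' : (p%:Z %| x' ^+ 4 + y' ^+ 4)%Z -> ~~ (p%:Z %| y')%Z -> (p %% 8 = 1)%N.
  move=> dvd_sum; rewrite dvdz_gcd negb_and => /orP[x_ndvd | y_ndvd].
  - by apply: (mod8 y x); rewrite // addrC.
  - exact: mod8 dvd_sum y_ndvd.
rewrite !(dvdz_pcharf pchar_p) rmorphD !rmorphXn /= => /eqP xy4 y_ndvd.
exact: Fp_sum_expr4_eq0_mod8 y_ndvd xy4.
Qed.

End OddPrime.

Theorem proposition3p1 (n u v r s : int) (p : nat) :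
  n = u ^+ 4 + v ^+ 4 ->
  n = r ^+ 4 + s ^+ 4 ->
  gcdz (gcdz u v) (gcdz r s) = 1 ->
  prime p -> odd p -> (p%:Z %| n)%Z ->
  (p %% 8 = 1)%N.
Proof.
move=> n_uv n_rs gcd_uvrs p_pr p_odd p_dvd_n.
have : ~~ (p%:Z %| gcdz (gcdz u v) (gcdz r s))%Z.
  by rewrite gcd_uvrs dvdz1 /=; apply: contraTneq p_pr => ->.
rewrite dvdz_gcd negb_and => /orP[p_ndvd_uv | p_ndvd_rs].
- by apply: (@dvdz_sum_expr4_mod8 p p_pr p_odd u v _ p_ndvd_uv); rewrite -n_uv.
- by apply: (@dvdz_sum_expr4_mod8 p p_pr p_odd r s _ p_ndvd_rs); rewrite -n_rs.
Qed.
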